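(* Forgetting the action on $\mathcal M$, $(f_{\mathcal D},f_{\mathcal M})\mapsto f_{\mathcal D}$ and $(\delta_{\mathcal D},\delta_{\mathcal M})\mapsto\delta_{\mathcal D}$, maps $\mathrm{Aut}(\mathcal D,\mathcal M)$ into $\mathrm{Aut}(\mathcal D)_{\mathcal J}$ and $\mathrm{Der}(\mathcal D,\mathcal M)$ into $\mathrm{Der}(\mathcal D)_{\mathcal J}$.
   Context: Let $\Bbbk$ be a field of characteristic zero, $V$ a $2n$-dimensional $\Bbbk$-vector space with symplectic form $\omega$. Let $D$ be the universal enveloping algebra of the Heisenberg Lie algebra $V\oplus\Bbbk\hbar$ ($[x,y]=\omega(x,y)\hbar$, $\hbar$ central), graded with $V$ in degree 1 and $\hbar$ in degree 2; let $\mathcal D=\prod_{i\geq0}D^i$ and $\mathcal A=\mathcal D/\hbar\mathcal D$. Fix a Lagrangian subspace $\mathfrak x\subset V$, let $\mathcal M=\mathcal D/\mathcal D\mathfrak x$, and let $\mathcal J\subset\mathcal D$ be the preimage of the ideal $\mathcal A\mathfrak x$ under $\mathcal D\to\mathcal A$. $\mathrm{Aut}(\mathcal D)$ (resp. $\mathrm{Der}(\mathcal D)$) is the group of $\Bbbk[[\hbar]]$-linear continuous automorphisms (resp. Lie algebra of continuous $\Bbbk[[\hbar]]$-linear derivations) of $\mathcal D$, and $\mathrm{Aut}(\mathcal D)_{\mathcal J}$, $\mathrm{Der}(\mathcal D)_{\mathcal J}$ consist of those $f$ with $f(\mathcal J)\subset\mathcal J$. $\mathrm{Der}(\mathcal D,\mathcal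 M)$ is the Lie algebra of pairs $(\delta_{\mathcal D},\delta_{\mathcal M})$ with $\delta_{\mathcal D}\in\mathrm{Der}(\mathcal D)$ and $\delta_{\mathcal M}:\mathcal M\to\mathcal M$ continuous $\Bbbk[[\hbar]]$-linear with $\delta_{\mathcal M}(um)=\delta_{\mathcal D}(u)m+u\,\delta_{\mathcal M}(m)$; $\mathrm{Aut}(\mathcal D,\mathcal M)$ is the group of pairs $(f_{\mathcal D},f_{\mathcal M})$ with $f_{\mathcal D}\in\mathrm{Aut}(\mathcal D)$ and $f_{\mathcal M}:\mathcal M\to\mathcal M$ a continuous $\Bbbk[[\hbar]]$-linear bijection with $f_{\mathcal M}(um)=f_{\mathcal D}(u)f_{\mathcal M}(m)$. *)

From HB Require Import structures.
From mathcomp Require Import all_boot all_order all_algebra.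
Set Implicit Arguments. Unset Strict Implicit. Unset Printing Implicit Defensive.
Import Order.TTheory GRing.Theory Num.Theory.
Local Open Scope ring_scope.

(* V = k^N (N = 2n), with basis e_0..e_{N-1}; the symplectic form is
   omega(x,y) = x *m Om *m y^T for row vectors.  The completed algebra
   D = prod_i D^i is modelled, via the (PBW / symmetrisation) isomorphism
   U(heis) ~ (Sym V[hbar], Moyal star product), as formal power series
   in the coordinates x_0..x_{N-1} and hbar:  u mu a = coefficient of
   x^mu hbar^a.  Grading: deg x_i = 1, deg hbar = 2. *)

Definition mono (N : nat) := {ffun 'I_N -> nat}.
Definition series (k : fieldType) (N : nat) := mono N -> nat -> k.

Section Series.
Variables (k : fieldType) (N : nat).
Local Notation S := (series k N).

Definition mdeg (mu : mono N) : nat := (\sum_(i < N) mu i)%N.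
Definition mono0 : mono N := [ffun => 0%N].
Definition munit (i : 'I_N) : mono N := [ffun j => nat_of_bool (j == i)].

Definition szero : S := fun _ _ => 0.
Definition sone : S := fun mu a => ((mu == mono0) && (a == 0%N))%:R.
Definition sadd (u v : S) : S := fun mu a => u mu a + v mu a.
Definition sopp (u : S) : S := fun mu a => - u mu a.
Definition ssub (u v : S) : S := sadd u (sopp v).
Definition sscal (c : k) (u : S) : S := fun mu a => c * u mu a.
Definition hbar : S := fun mu a => ((mu == mono0) && (a == 1%N))%:R.

(* the k[[hbar]]-module structure: (sum_i c_i hbar^i) . u *)
Definition hscale (c : nat -> k) (u : S) : S :=
  fun mu a => \sum_(i < a.+1) c i * u mu (a - i)%N.

Definition lin (v : 'rV[k]_N) : S :=
  fun mu a => (a == 0%N)%:R * \sum_(i < N) v 0 i * (mu == munit i)%:R.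

Definition dpart (i : 'I_N) (f : S) : S :=
  fun mu a => (mu i).+1%:R * f [ffun j => (mu j + nat_of_bool (j == i))%N] a.
Definition diter (s : seq 'I_N) (f : S) : S := foldr dpart f s.

Definition cmul (f g : S) : S :=
  fun mu a => \sum_(a1 < a.+1)
     \sum_(al : {ffun 'I_N -> 'I_(mdeg mu).+1} | [forall i, al i <= mu i]%N)
        f [ffun i => nat_of_ord (al i)] a1 *
        g [ffun i => (mu i - al i)%N] (a - a1)%N.

Variable Om : 'M[k]_N.

(* m-th power of the Poisson bidifferential operator sum_ij Om_ij d_i (x) d_j *)
Definition Bm (m : nat) (f g : S) : S :=
  fun mu a => \sum_(s : {ffun 'I_m -> 'I_N * 'I_N})
     (\prod_(l < m) Om (s l).1 (s l).2) *
     cmul (diter [seq (s l).1 | l <- enum 'I_m] f)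
          (diter [seq (s l).2 | l <- enum 'I_m] g) mu a.

(* Moyal star product: f * g = sum_m (hbar/2)^m / m! B_m(f,g);
   it satisfies [x_i, x_j] = Om_ij hbar, i.e. [x,y] = omega(x,y) hbar. *)
Definition star (f g : S) : S :=
  fun mu a => \sum_(m < a.+1) ((2 ^ m * m`!)%N%:R)^-1 * Bm m f g mu (a - m)%N.

(* the linear topology of prod_i D^i: F_p = elements of degree >= p *)
Definition filt (p : nat) (u : S) : Prop :=
  forall mu a, (mdeg mu + a.*2 < p)%N -> u mu a = 0.

Definition scontinuous (f : S -> S) : Prop :=
  forall p, exists p', forall u, filt p' u -> filt p (f u).

Definition hlinear (f : S -> S) : Prop :=
  (forall u v, f (sadd u v) = sadd (f u) (f v)) /\
  (forall c u, f (hscale c u) = hscale c (f u)).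

Definition AutD (f : S -> S) : Prop :=
  [/\ bijective f, hlinear f, scontinuous f,
      (forall u v, f (star u v) = star (f u) (f v)) & f sone = sone].

Definition DerD (d : S -> S) : Prop :=
  [/\ hlinear d, scontinuous d &
      forall u v, d (star u v) = sadd (star (d u) v) (star u (d v))].

Variable X : 'M[k]_N.  (* row space of X = the Lagrangian subspace x *)

Definition DX (u : S) : Prop :=
  exists w : 'I_N -> S, u = \big[sadd/szero]_(i < N) star (w i) (lin (row i X)).

(* J = preimage of A x under D -> A = D / hbar D *)
Definition Jset (u : S) : Prop :=
  exists v, DX v /\ exists w, ssub u v = star hbar w.

Definition AutD_J (f : S -> S) : Prop := AutD f /\ (forall u, Jset u -> Jset (f u)).
Definition DerD_J (d : S -> S) : Prop := DerD d /\ (forall u, Jset u -> Jset (d u)).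

(* Maps M -> M, M = D / D x, are represented by lifts F : D -> D
   compatible with the congruence modulo D x. *)
Definition eqM (u v : S) : Prop := DX (ssub u v).

Definition Mmap (F : S -> S) : Prop := forall u v, eqM u v -> eqM (F u) (F v).
Definition Mhlinear (F : S -> S) : Prop :=
  (forall u v, eqM (F (sadd u v)) (sadd (F u) (F v))) /\
  (forall c u, eqM (F (hscale c u)) (hscale c (F u))).
Definition Mbijective (F : S -> S) : Prop :=
  (forall u v, eqM (F u) (F v) -> eqM u v) /\ (forall w, exists u, eqM (F u) w).
(* continuity for the quotient topology on M (images of the F_p) *)
Definition Mcontinuous (F : S -> S) : Prop :=
  forall p, exists p', forall u, filt p' u -> exists v, filt p v /\ eqM (F u) v.

Definition AutDM (f F : S -> S) : Prop :=
  AutD f /\ [/\ Mmap F, Mhlinear F, Mbijective F, Mcontinuous F &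
      forall u m, eqM (F (star u m)) (star (f u) (F m))].

Definition DerDM (d dM : S -> S) : Prop :=
  DerD d /\ [/\ Mmap dM, Mhlinear dM, Mcontinuous dM &
      forall u m, eqM (dM (star u m)) (sadd (star (d u) m) (star u (dM m)))].

End Series.

Definition symplectic (k : fieldType) (N : nat) (Om : 'M[k]_N) : Prop :=
  Om^T = - Om /\ \det Om != 0.

Definition lagrangian (k : fieldType) (n : nat) (Om X : 'M[k]_(n.*2)) : Prop :=
  \rank X = n /\ X *m Om *m X^T = 0.

From HB Require Import structures.
From mathcomp Require Import all_boot all_order all_algebra ring.
From Stdlib Require Import FunctionalExtensionality.
Set Implicit Arguments. Unset Strict Implicit. Unset Printing Implicit Defensive.
Import GRing.Theory.
Local Open Scope ring_scope.

(* Reduction modulo hbar sends the star product to the commutative product of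
   A = k[[V]], D x onto the ideal A x, and J onto the preimage of A x.  So u is
   in J iff its reduction lies in A x.  If (f, f_M) acts on M, pick m0 with
   f_M m0 = 1 in M; then f u = f_M (u m0) - f u (f_M m0 - 1) in M, and the
   reduction of f_M v lies in A x whenever that of v does (write v = v' + hbar w
   with v' in D x and use hbar-linearity of f_M).  Derivations are handled in
   the same way through d u = d_M (u 1) - u d_M 1 in M. *)

Section CommutativeProduct.
Variables (k : fieldType) (N : nat).
Local Notation mono := (mono N).

(* the product of A on coefficient functions: the a = 0 slice of [cmul] *)
Definition amul (g h : mono -> k) (mu : mono) : k :=
  \sum_(al : {ffun 'I_N -> 'I_(mdeg mu).+1} | [forall i, al i <= mu i]%N)
     g [ffun i => nat_of_ord (al i)] * h [ffun i => (mu i - al i)%N].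

Definition aone : mono -> k := fun mu => (mu == mono0 N)%:R.

Definition mle (a b : mono) := [forall i, a i <= b i]%N.
Definition madd (a b : mono) : mono := [ffun i => (a i + b i)%N].
Definition msub (a b : mono) : mono := [ffun i => (a i - b i)%N].

Definition mdivisors (mu : mono) : seq mono :=
  [seq [ffun i => nat_of_ord (al i)] | al : {ffun 'I_N -> 'I_(mdeg mu).+1}
     <- enum [pred al : {ffun 'I_N -> 'I_(mdeg mu).+1} | [forall i, al i <= mu i]%N]].

Lemma amulE g h mu : amul g h mu = \sum_(b <- mdivisors mu) g b * h (msub mu b).
Proof.
rewrite /amul /mdivisors -deprecated_filter_index_enum big_map big_filter.
by apply: eq_bigr => al _; congr (_ * h _); apply/ffunP => i; rewrite !ffunE.
Qed.

Lemma mdivisors_uniq mu : uniq (mdivisors mu).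
Proof.
rewrite map_inj_uniq ?enum_uniq // => a b /ffunP eq_ab; apply/ffunP => i.
by apply: val_inj; have := eq_ab i; rewrite !ffunE.
Qed.

Lemma leq_mdeg (mu : mono) i : (mu i <= mdeg mu)%N.
Proof. by rewrite /mdeg (bigD1 i) //= leq_addr. Qed.

Lemma mem_mdivisors mu b : (b \in mdivisors mu) = mle b mu.
Proof.
apply/mapP/forallP => [[al]|le_b].
  by rewrite mem_enum inE => /forallP le_al -> i; rewrite ffunE.
have lt_b i : (b i < (mdeg mu).+1)%N by rewrite ltnS (leq_trans (le_b i)) ?leq_mdeg.
exists [ffun i => Ordinal (lt_b i)].
  by rewrite mem_enum inE; apply/forallP => i; rewrite ffunE; apply: le_b.
by apply/ffunP => i; rewrite !ffunE.
Qed.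

Lemma perm_big_mdivisors mu (s : seq mono) (F : mono -> k) :
  uniq s -> (forall b, (b \in s) = mle b mu) ->
  \sum_(b <- s) F b = \sum_(b <- mdivisors mu) F b.
Proof.
move=> s_uniq mem_s; apply/perm_big/uniq_perm; rewrite ?mdivisors_uniq // => b.
by rewrite mem_s mem_mdivisors.
Qed.

Lemma msubK a b : mle b a -> msub a (msub a b) = b.
Proof. by move=> /forallP le_ba; apply/ffunP => i; rewrite !ffunE subKn. Qed.

Lemma amulC g h mu : amul g h mu = amul h g mu.
Proof.
rewrite !amulE -(@perm_big_mdivisors mu (map (msub mu) (mdivisors mu))).
- rewrite big_map; apply: eq_big_seq => b; rewrite mem_mdivisors => le_b.
  by rewrite msubK // mulrC.
- rewrite map_inj_in_uniq ?mdivisors_uniq // => a b.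
  by rewrite !mem_mdivisors => le_a le_b eq_ab; rewrite -(msubK le_a) eq_ab msubK.
move=> c; apply/mapP/idP => [[b _ ->]|le_c].
  by apply/forallP => i; rewrite ffunE leq_subr.
exists (msub mu c); last by rewrite msubK.
by rewrite mem_mdivisors; apply/forallP => i; rewrite ffunE leq_subr.
Qed.

Lemma amul1 g mu : amul g aone mu = g mu.
Proof.
have mu_mu : mu \in mdivisors mu by rewrite mem_mdivisors; apply/forallP.
rewrite amulE (bigD1_seq mu) ?mdivisors_uniq //= big1_seq ?addr0.
  suff /eqP-> : msub mu mu == mono0 N by rewrite /aone eqxx mulr1.
  by apply/eqP/ffunP => i; rewrite !ffunE subnn.
move=> b /andP[b_neq]; rewrite mem_mdivisors => /forallP le_b.
rewrite /aone; case: eqP => [eq0|]; last by rewrite mulr0.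
case/eqP: b_neq; apply/ffunP => i; have := congr1 (fun f : mono => f i) eq0.
by rewrite !ffunE => /eqP; rewrite subn_eq0 => ge_b; apply/eqP; rewrite eqn_leq ge_b le_b.
Qed.

Lemma amulA g h l mu : amul (amul g h) l mu = amul g (amul h l) mu.
Proof.
rewrite !amulE.
under eq_big_seq => a.
  rewrite mem_mdivisors => le_a.
  rewrite amulE -(@perm_big_mdivisors a [seq b <- mdivisors mu | mle b a]); last first.
  - move=> b; rewrite mem_filter mem_mdivisors; apply/andP/idP => [[]//|le_b].
    by split=> //; apply/forallP => i; rewrite (leq_trans (forallP le_b i) (forallP le_a i)).
  - by rewrite filter_uniq ?mdivisors_uniq.
  rewrite big_filter mulr_suml.
  over.
rewrite (exchange_big_dep xpredT) //=.
apply: eq_big_seq => b; rewrite mem_mdivisors => le_b.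
rewrite amulE mulr_sumr -big_filter.
rewrite (perm_big [seq madd b c | c <- mdivisors (msub mu b)]); last first.
  apply: uniq_perm.
  + by rewrite filter_uniq ?mdivisors_uniq.
  + rewrite map_inj_uniq ?mdivisors_uniq // => c d /ffunP eq_cd; apply/ffunP => i.
    by have := eq_cd i; rewrite !ffunE => /addnI.
  move=> a; rewrite mem_filter mem_mdivisors; apply/andP/mapP => [[le_ba le_a]|[c]].
    exists (msub a b).
      by rewrite mem_mdivisors; apply/forallP => i; rewrite !ffunE leq_sub2r ?(forallP le_a).
    by apply/ffunP => i; rewrite !ffunE subnKC ?(forallP le_ba).
  rewrite mem_mdivisors => /forallP le_c ->.
  split; apply/forallP => i; rewrite !ffunE ?leq_addr //.
  by rewrite -leq_subRL ?(forallP le_b) //; have := le_c i; rewrite ffunE.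
rewrite big_map; apply: eq_bigr => c _.
have -> : msub (msub mu b) c = msub mu (madd b c) by apply/ffunP => i; rewrite !ffunE subnDA.
have -> : msub (madd b c) b = c by apply/ffunP => i; rewrite !ffunE addKn.
by rewrite mulrA.
Qed.

Lemma eq_amul g g' h h' mu : g =1 g' -> h =1 h' -> amul g h mu = amul g' h' mu.
Proof. by move=> eq_g eq_h; apply: eq_bigr => al _; rewrite eq_g eq_h. Qed.

Lemma amulDl g1 g2 h mu : amul (fun x => g1 x + g2 x) h mu = amul g1 h mu + amul g2 h mu.
Proof. by rewrite /amul -big_split; apply: eq_bigr => al _; rewrite mulrDl. Qed.

Lemma amulNl g h mu : amul (fun x => - g x) h mu = - amul g h mu.
Proof. by rewrite /amul -sumrN; apply: eq_bigr => al _; rewrite mulNr. Qed.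

Lemma amul0l g h mu : g =1 (fun _ => 0) -> amul g h mu = 0.
Proof. by move=> g0; rewrite /amul big1 // => al _; rewrite g0 mul0r. Qed.

Lemma amul_suml (c : 'I_N -> mono -> k) h mu :
  amul (fun x => \sum_(i < N) c i x) h mu = \sum_(i < N) amul (c i) h mu.
Proof. by rewrite /amul exchange_big /=; apply: eq_bigr => al _; rewrite mulr_suml. Qed.

Lemma amul_sumr (c : 'I_N -> mono -> k) h mu :
  amul h (fun x => \sum_(i < N) c i x) mu = \sum_(i < N) amul h (c i) mu.
Proof. by rewrite amulC amul_suml; apply: eq_bigr => i _; rewrite amulC. Qed.

Lemma amulBr g h1 h2 mu :
  amul g (fun x => h1 x - h2 x) mu = amul g h1 mu - amul g h2 mu.
Proof. by rewrite amulC amulDl amulNl !(amulC g). Qed.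

Section Ideal.
Variable gen : 'I_N -> mono -> k.

Definition aideal (g : mono -> k) :=
  exists c : 'I_N -> mono -> k, forall mu, g mu = \sum_(i < N) amul (c i) (gen i) mu.

Lemma eq_aideal g g' : g =1 g' -> aideal g -> aideal g'.
Proof. by move=> eq_g [c gE]; exists c => mu; rewrite -eq_g. Qed.

Lemma aidealD g1 g2 : aideal g1 -> aideal g2 -> aideal (fun x => g1 x + g2 x).
Proof.
move=> [c1 g1E] [c2 g2E]; exists (fun i x => c1 i x + c2 i x) => mu.
by rewrite g1E g2E -big_split; apply: eq_bigr => i _; rewrite amulDl.
Qed.

Lemma aidealN g : aideal g -> aideal (fun x => - g x).
Proof.
move=> [c gE]; exists (fun i x => - c i x) => mu.
by rewrite gE -sumrN; apply: eq_bigr => i _; rewrite amulNl.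
Qed.

Lemma aidealB g1 g2 : aideal g1 -> aideal g2 -> aideal (fun x => g1 x - g2 x).
Proof. by move=> I1 /aidealN; apply: aidealD. Qed.

Lemma aideal_mull a g : aideal g -> aideal (amul a g).
Proof.
move=> [c gE]; exists (fun i => amul a (c i)) => mu.
rewrite (@eq_amul _ a _ (fun x => \sum_(i < N) amul (c i) (gen i) x)) //.
by rewrite amul_sumr; apply: eq_bigr => i _; rewrite amulA.
Qed.

Lemma aideal_mulr a g : aideal g -> aideal (amul g a).
Proof. by move=> /(aideal_mull a); apply: eq_aideal => x; rewrite amulC. Qed.

End Ideal.
End CommutativeProduct.

Section ReductionModHbar.
Variables (k : fieldType) (N : nat) (Om X : 'M[k]_N).
Local Notation S := (series k N).
Local Notation mono := (mono N).

Definition red (u : S) : mono -> k := fun mu => u mu 0%N.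

Definition hdiv (u : S) : S := fun mu a => u mu a.+1.

Definition hbar_coef : nat -> k := fun i => (i == 1%N)%:R.

Lemma Bm0 f g mu a : Bm Om 0 f g mu a = cmul f g mu a.
Proof.
rewrite /Bm (eq_bigr (fun _ => cmul f g mu a)); last first.
  by move=> s _; rewrite big_ord0 mul1r enum_ord0.
by rewrite sumr_const card_ffun card_ord expn0.
Qed.

Lemma red_star u v : red (star Om u v) =1 amul (red u) (red v).
Proof.
by move=> mu; rewrite /red /star big_ord1 Bm0 expn0 fact0 invr1 mul1r /cmul big_ord1.
Qed.

Lemma diter_hbar i s mu a : diter (i :: s) (@hbar k N) mu a = 0.
Proof.
elim: s i mu a => [|j s IHs] i mu a /=.
  rewrite /dpart /hbar; case: eqP => [eq0|]; last by rewrite mulr0.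
  by have := congr1 (fun f : mono => f i) eq0; rewrite !ffunE eqxx addn1.
by have /= IHj := IHs j; rewrite {1}/dpart IHj mulr0.
Qed.

(* hbar is constant in x, so the terms m > 0 of its Moyal product vanish *)
Lemma Bm_hbar m w mu a : Bm Om m.+1 (@hbar k N) w mu a = 0.
Proof.
rewrite /Bm big1 // => s _.
case s1E: [seq (s l).1 | l <- enum 'I_m.+1] => [|i t].
  by have := congr1 size s1E; rewrite size_map size_enum_ord.
rewrite /cmul [X in _ * X]big1 ?mulr0 // => a1 _.
by rewrite big1 // => al _; rewrite diter_hbar mul0r.
Qed.

Lemma hbar_mono0 (mu : mono) : @hbar k N mu 0%N = 0.
Proof. by rewrite /hbar andbF. Qed.

Lemma cmul_hbar w mu a : cmul (@hbar k N) w mu a = if a is a'.+1 then w mu a' else 0.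
Proof.
case: a => [|a].
  by rewrite /cmul big_ord1 big1 // => al _; rewrite hbar_mono0 mul0r.
rewrite /cmul big_ord_recl big1 ?add0r; last by move=> al _; rewrite hbar_mono0 mul0r.
rewrite big_ord_recl [X in _ + X]big1 ?addr0; last first.
  by move=> i _; rewrite big1 // => al _; rewrite /hbar /= andbF mul0r.
pose al0 : {ffun 'I_N -> 'I_(mdeg mu).+1} := [ffun => ord0].
have le_al0 : [forall i, al0 i <= mu i]%N by apply/forallP => i; rewrite ffunE.
rewrite (bigD1 al0 le_al0) /= big1 ?addr0; last first.
  move=> al /andP[_ al_neq]; rewrite /hbar; case: eqP => [eq0|]; last by rewrite mul0r.
  case/eqP: al_neq; apply/ffunP => i; have := congr1 (fun f : mono => f i) eq0.
  by rewrite !ffunE => al_i; apply: val_inj.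
have /eqP-> : [ffun i => nat_of_ord (al0 i)] == mono0 N.
  by apply/eqP/ffunP => i; rewrite !ffunE.
have -> : [ffun i => (mu i - al0 i)%N] = mu by apply/ffunP => i; rewrite !ffunE subn0.
by rewrite /hbar eqxx /= mul1r subn1.
Qed.

Lemma star_hbarE w mu a : star Om (@hbar k N) w mu a = if a is a'.+1 then w mu a' else 0.
Proof.
rewrite /star big_ord_recl /= Bm0 expn0 fact0 invr1 mul1r subn0 big1 ?addr0.
  exact: cmul_hbar.
by move=> i _; rewrite /bump /= Bm_hbar mulr0.
Qed.

Lemma star_hbar_hdiv (z : S) : red z =1 (fun _ => 0) -> z = star Om (@hbar k N) (hdiv z).
Proof.
move=> z0; apply: functional_extensionality => mu; apply: functional_extensionality => a.
by rewrite star_hbarE; case: a => [|a] //; apply: z0.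
Qed.

Lemma hscale_hdiv (z : S) : red z =1 (fun _ => 0) -> z = hscale hbar_coef (hdiv z).
Proof.
move=> z0; apply: functional_extensionality => mu; apply: functional_extensionality => a.
rewrite /hscale /hbar_coef; case: a => [|a]; first by rewrite big_ord1 mul0r; apply: z0.
rewrite big_ord_recl mul0r add0r big_ord_recl /= mul1r big1 ?addr0 ?subn1 //.
by move=> i _; rewrite mul0r.
Qed.

Lemma red_hscale c (u : S) : red (hscale c u) =1 (fun mu => c 0%N * red u mu).
Proof. by move=> mu; rewrite /red /hscale big_ord1. Qed.

Lemma red_big (F : 'I_N -> S) :
  red (\big[@sadd k N/@szero k N]_(i < N) F i) =1 (fun mu => \sum_(i < N) red (F i) mu).
Proof. by move=> mu; elim/big_rec2: _ => // i y1 y2 _ <-. Qed.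

Local Notation Ax := (aideal (fun i => red (lin (row i X)))).

Lemma DX_red u : DX Om X u -> Ax (red u).
Proof.
move=> [w ->]; exists (fun i => red (w i)) => mu.
by rewrite red_big; apply: eq_bigr => i _; rewrite red_star.
Qed.

Lemma eqM_red u v : eqM Om X u v -> Ax (fun mu => red u mu - red v mu).
Proof. exact: DX_red. Qed.

Lemma aideal_DX g : Ax g -> exists2 v, DX Om X v & red v =1 g.
Proof.
move=> [c gE]; pose lift g : S := fun mu a => (a == 0%N)%:R * g mu.
exists (\big[@sadd k N/@szero k N]_(i < N) star Om (lift (c i)) (lin (row i X))).
  by exists (fun i => lift (c i)).
move=> mu; rewrite red_big gE; apply: eq_bigr => i _; rewrite red_star.
by apply: eq_amul => x //; rewrite /red /lift mul1r.
Qed.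

Lemma Jset_red u : Jset Om X u <-> Ax (red u).
Proof.
split=> [[v [/DX_red Av [w uE]]]|/aideal_DX [v Dv vE]].
  apply: eq_aideal Av => mu; have := congr1 (fun f : S => f mu 0%N) uE.
  rewrite -[star _ _ _ mu 0%N]/(red (star Om (@hbar k N) w) mu) red_star.
  rewrite amul0l; last exact: hbar_mono0.
  by rewrite /ssub /sadd /sopp => /eqP; rewrite subr_eq0 => /eqP.
exists v; split=> //; exists (hdiv (ssub u v)); apply: star_hbar_hdiv => mu.
by rewrite /red /ssub /sadd /sopp -/(red v mu) vE subrr.
Qed.

Section Maps.
Variable F : S -> S.
Hypotheses (F_Mmap : Mmap Om X F) (F_Mhlinear : Mhlinear Om X F).

Lemma Mhlinear_red0 : Ax (red (F (@szero k N))).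
Proof.
have zero_add : sadd (@szero k N) (@szero k N) = @szero k N.
  apply: functional_extensionality => mu; apply: functional_extensionality => a.
  by rewrite /sadd /szero addr0.
have := aidealN (eqM_red (F_Mhlinear.1 (@szero k N) (@szero k N))).
by rewrite zero_add; apply: eq_aideal => mu; rewrite /sadd /red; ring.
Qed.

(* write v = v' + hbar w with v' in D x: then F v = F 0 + hbar F w in M *)
Lemma Mmap_red_aideal v : Ax (red v) -> Ax (red (F v)).
Proof.
move=> /aideal_DX [v' Dv' v'E].
have red_z : red (ssub v v') =1 (fun _ => 0).
  by move=> mu; rewrite /red /ssub /sadd /sopp -/(red v' mu) v'E subrr.
set w := hdiv (ssub v v').
have vE : v = sadd v' (hscale hbar_coef w).
  rewrite /w -(hscale_hdiv red_z).
  apply: functional_extensionality => mu; apply: functional_extensionality => a.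
  by rewrite /sadd /ssub /sopp addrC subrK.
have Av' : Ax (fun mu => red (F v') mu - red (F (@szero k N)) mu).
  apply/eqM_red/F_Mmap; rewrite /eqM.
  suff -> : ssub v' (@szero k N) = v' by [].
  apply: functional_extensionality => mu; apply: functional_extensionality => a.
  by rewrite /ssub /sadd /sopp /szero oppr0 addr0.
have := aidealD (aidealD (eqM_red (F_Mhlinear.1 v' (hscale hbar_coef w))) Av')
  (aidealD Mhlinear_red0 (eqM_red (F_Mhlinear.2 hbar_coef w))).
rewrite -vE; apply: eq_aideal => mu.
by rewrite /sadd red_hscale /hbar_coef /= mul0r /red; ring.
Qed.

End Maps.

Lemma AutDM_J fD fM : AutDM Om X fD fM -> AutD_J Om X fD.
Proof.
move=> [autD [fM_Mmap fM_Mhlinear [_ fM_surj] _ fM_mul]]; split=> // u /Jset_red Au.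
apply/Jset_red; have [m0 m0E] := fM_surj (@sone k N).
have Aum0 : Ax (red (star Om u m0)).
  by apply: eq_aideal (aideal_mulr (red m0) Au) => mu; rewrite red_star.
have := aidealB (aidealB (Mmap_red_aideal fM_Mmap fM_Mhlinear Aum0)
  (eqM_red (fM_mul u m0))) (aideal_mull (red (fD u)) (eqM_red m0E)).
apply: eq_aideal => mu; rewrite amulBr red_star.
have -> : amul (red (fD u)) (red (@sone k N)) mu = red (fD u) mu.
  by rewrite -(amul1 (red (fD u)) mu); apply: eq_amul => // x; rewrite /red /sone andbT.
ring.
Qed.

Lemma DerDM_J dD dM : DerDM Om X dD dM -> DerD_J Om X dD.
Proof.
move=> [derD [dM_Mmap dM_Mhlinear _ dM_leibniz]]; split=> // u /Jset_red Au.
apply/Jset_red; set one := @sone k N.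
have Au1 : Ax (red (star Om u one)).
  by apply: eq_aideal (aideal_mulr (red one) Au) => mu; rewrite red_star.
have AudM1 : Ax (red (star Om u (dM one))).
  by apply: eq_aideal (aideal_mulr (red (dM one)) Au) => mu; rewrite red_star.
have := aidealB (aidealB (Mmap_red_aideal dM_Mmap dM_Mhlinear Au1)
  (eqM_red (dM_leibniz u one))) AudM1.
apply: eq_aideal => mu; rewrite /red /sadd -!/(red _ _) red_star.
have -> : amul (red (dD u)) (red one) mu = red (dD u) mu.
  by rewrite -(amul1 (red (dD u)) mu); apply: eq_amul => // x; rewrite /red /one /sone andbT.
ring.
Qed.

End ReductionModHbar.

Theorem lemma3p2 (k : fieldType) (n : nat) (Om X : 'M[k]_(n.*2)) :
  [pchar k] =i pred0 ->
  symplectic Om ->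
  lagrangian Om X ->
  (forall fD fM : series k n.*2 -> series k n.*2,
      AutDM Om X fD fM -> AutD_J Om X fD) /\
  (forall dD dM : series k n.*2 -> series k n.*2,
      DerDM Om X dD dM -> DerD_J Om X dD).
Proof.
move=> _ _ _; split=> [fD fM|dD dM]; [exact: AutDM_J | exact: DerDM_J].
Qed.
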